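(* Let $\mathbf{L}=(L,\le)$ be a nontrivial finite join-semilattice with greatest element $1$ satisfying property $( * )$, and let $(R,\vee,\circ)$ be a subsemiring of $(\mathrm{JM}_1(\mathbf{L}),\vee,\circ)$ such that (i) $f_{a,b}\in R$ for all $a\in L\setminus\{1\}$ and $b\in L$; (ii) for every $f\in R$ there exist $a\in L\setminus\{1\}$ and $b\in L$ with $f_{a,b}\le f$ (pointwise). Then $(R,\vee,\circ)$ is a finite simple additively idempotent semiring with absorbing greatest element, and it possesses an idempotent irreducible $R$-semimodule satisfying $( * )$. Conversely, every finite simple additively idempotent semiring $(S,+,\cdot)$ with $|S|>2$, with absorbing greatest element, and which possesses an idempotent irreducible $S$-semimodule satisfying $( * )$, is isomorphic to such a semiring $(R,\vee,\circ)$ for some such $\mathbf{L}$.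
   Context: A semiring is a nonempty set with a commutative semigroup operation $+$ and a semigroup operation $\cdot$ satisfying both distributive laws; simple if its only congruences are the identity and the full relation; additively idempotent if $r+r=r$, with order $x\le y:\Leftrightarrow x+y=y$ and (finite case) greatest element the sum of all elements. An element is absorbing if $sr=r=rs$ for all $s$. For a finite join-semilattice $\mathbf{L}$, $\mathrm{JM}_1(\mathbf{L})$ is the set of join-preserving maps $f:L\to L$ with $f(1)=1$, a semiring under pointwise join and composition; $f_{a,b}(x)=b$ if $x\le a$ and $1$ otherwise. An $R$-semimodule is a commutative semigroup $(M,+)$ with an action $R\times M\to M$ such that $r(sx)=(rs)x$, $(r+s)x=rx+sx$, $r(x+y)=rx+ry$; it is idempotent if $x+x=x$. A subsemimodule is a subsemigroup closed under the action; a semimodule congruence is an equivalence compatible with $+$ and the action. $M$ is quasitrivial if $rx=sx$ for all $r,s\in R,x\in M$; id-quasitrivial if $rx=x$ for all $r,x$. $M$ is sub-irreducible if it is not quasitrivial and all its proper subsemimodules are id-quasitrivial; quotient-irreducible if it is not quasitrivial and its only congruences are the identity and $M\times M$; irreducible if both. A finite idempotent commutative semigroup (semilattice) $(M,+)$ with greatest element $\infty_M$ satisfies $( * )$ if there exists $u\in M$ with $\infty_M\ne u+x$ for all $x\in M\setminus\{\infty_M\}$. *)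

From HB Require Import structures.
From mathcomp Require Import all_boot all_order.
Set Implicit Arguments.
Unset Strict Implicit.
Unset Printing Implicit Defensive.
Import Order.TTheory.
Local Open Scope order_scope.

Section Semiring.
Variables (S : Type) (add mul : S -> S -> S).

Definition is_semiring : Prop :=
  [/\ (forall x y z, add x (add y z) = add (add x y) z),
      (forall x y, add x y = add y x),
      (forall x y z, mul x (mul y z) = mul (mul x y) z),
      (forall x y z, mul x (add y z) = add (mul x y) (mul x z)) &
      (forall x y z, mul (add x y) z = add (mul x z) (mul y z))].

Definition sr_congruence (rel : S -> S -> Prop) : Prop :=
  [/\ (forall x, rel x x), (forall x y, rel x y -> rel y x),
      (forall x y z, rel x y -> rel y z -> rel x z),
      (forall x y x' y', rel x y -> rel x' y' -> rel (add x x') (add y y')) &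
      (forall x y x' y', rel x y -> rel x' y' -> rel (mul x x') (mul y y'))].

Definition sr_simple : Prop :=
  forall rel, sr_congruence rel ->
    (forall x y, rel x y <-> x = y) \/ (forall x y, rel x y).

Definition add_idempotent : Prop := forall r, add r r = r.

(* greatest element w.r.t. x <= y :<-> x + y = y, which is absorbing *)
Definition has_absorbing_greatest : Prop :=
  exists t, (forall x, add x t = t) /\ (forall s, mul s t = t /\ mul t s = t).
End Semiring.

(* [top] is the greatest element of (M,+) w.r.t. x <= y :<-> x + y = y *)
Definition star (M : Type) (addM : M -> M -> M) : Prop :=
  exists top, (forall x, addM x top = top) /\
    exists u, forall x, x <> top -> addM u x <> top.

Section Semimodule.
Variables (S M : Type) (addS mulS : S -> S -> S).
Variables (addM : M -> M -> M) (act : S -> M -> M).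

Definition is_semimodule : Prop :=
  [/\ (forall x y z, addM x (addM y z) = addM (addM x y) z),
      (forall x y, addM x y = addM y x),
      (forall r s x, act r (act s x) = act (mulS r s) x),
      (forall r s x, act (addS r s) x = addM (act r x) (act s x)) &
      (forall r x y, act r (addM x y) = addM (act r x) (act r y))].

Definition sm_idempotent : Prop := forall x, addM x x = x.

Definition quasitrivial : Prop := forall r s x, act r x = act s x.

Definition subsemimodule (N : M -> Prop) : Prop :=
  [/\ exists x, N x,
      (forall x y, N x -> N y -> N (addM x y)) &
      (forall r x, N x -> N (act r x))].

Definition proper_subset (N : M -> Prop) : Prop := exists x, ~ N x.

Definition id_quasitrivial_on (N : M -> Prop) : Prop :=
  forall r x, N x -> act r x = x.

Definition sub_irreducible : Prop :=
  ~ quasitrivial /\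
  forall N, subsemimodule N -> proper_subset N -> id_quasitrivial_on N.

Definition sm_congruence (rel : M -> M -> Prop) : Prop :=
  [/\ (forall x, rel x x), (forall x y, rel x y -> rel y x),
      (forall x y z, rel x y -> rel y z -> rel x z),
      (forall x y x' y', rel x y -> rel x' y' -> rel (addM x x') (addM y y')) &
      (forall r x y, rel x y -> rel (act r x) (act r y))].

Definition quotient_irreducible : Prop :=
  ~ quasitrivial /\
  forall rel, sm_congruence rel ->
    (forall x y, rel x y <-> x = y) \/ (forall x y, rel x y).

Definition irreducible : Prop := sub_irreducible /\ quotient_irreducible.
End Semimodule.

(* S possesses an idempotent irreducible S-semimodule satisfying (star);
   (star) is only defined for finite semilattices, so M is finite. *)
Definition has_idem_irred_star_module (S : Type) (addS mulS : S -> S -> S) : Prop :=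
  exists (M : finType) (addM : M -> M -> M) (act : S -> M -> M),
    [/\ is_semimodule addS mulS addM act, sm_idempotent addM,
        irreducible addM act & star addM].

Section JM.
Context {d : Order.disp_t} {L : finTJoinSemilatticeType d}.

Definition fjoin (f g : {ffun L -> L}) : {ffun L -> L} := [ffun x => f x `|` g x].
Definition fcomp (f g : {ffun L -> L}) : {ffun L -> L} := [ffun x => f (g x)].
Definition fle (f g : {ffun L -> L}) : Prop := forall x, f x <= g x.

Definition in_JM1 (f : {ffun L -> L}) : Prop :=
  (forall x y, f (x `|` y) = f x `|` f y) /\ f \top = \top.

Definition fab (a b : L) : {ffun L -> L} := [ffun x => if x <= a then b else \top].

Definition nontrivial_L : Prop := exists a b : L, a != b.

Definition subsemiring_JM1 (R : {set {ffun L -> L}}) : Prop :=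
  [/\ (forall f, f \in R -> in_JM1 f),
      (exists f, f \in R),
      (forall f g, f \in R -> g \in R -> fjoin f g \in R) &
      (forall f g, f \in R -> g \in R -> fcomp f g \in R)].

(* the semiring (R, \/, o) as a finite type with its operations; under the
   closure hypotheses of subsemiring_JM1, insubd never uses its default *)
Definition Rt (R : {set {ffun L -> L}}) : finType := {f : {ffun L -> L} | f \in R}.
Definition Radd (R : {set {ffun L -> L}}) (x y : Rt R) : Rt R :=
  insubd x (fjoin (val x) (val y)).
Definition Rmul (R : {set {ffun L -> L}}) (x y : Rt R) : Rt R :=
  insubd x (fcomp (val x) (val y)).
End JM.

(* Forward direction: R acts on L, and the maps f_{x,z} move any x <> 1 to any
   z, so every congruence of L identifying x </= y identifies 1 with everything.
   In R, if a congruence identifies h with k, where h p < k p, then composing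
   with f_{h p, c} on the left and f_{a,p} on the right identifies f_{a,c} with
   the constant 1; as every f lies above some f_{a,b}, f = f \/ f_{a,b} is
   identified with f \/ 1 = 1.
   Converse: the irreducible semimodule M is a finite semilattice on which the
   absorbing element of S acts as the constant top.  Irreducibility makes S act
   transitively on M minus top and separate points; minimality arguments then
   produce elements acting as every f_{a,b}, and simplicity of S makes the
   action faithful and forces every element to dominate some f_{a,b}.  Hence S
   is isomorphic to its image in JM_1(M). *)

From HB Require Import structures.
From mathcomp Require Import all_boot all_order.
From Stdlib Require Import Classical.
Import Order.TTheory.
Local Open Scope order_scope.
Set Implicit Arguments.
Unset Strict Implicit.
Unset Printing Implicit Defensive.

Lemma identity_or_nontrivial (T : Type) (rel : T -> T -> Prop) :
  (forall x, rel x x) ->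
  (forall x y, rel x y <-> x = y) \/ exists x y, rel x y /\ x <> y.
Proof.
move=> refl; case: (classic (exists x y, rel x y /\ x <> y)) => [|none]; first by right.
by left=> x y; split=> [xy|-> //]; apply: NNPP => neq; apply: none; exists x, y.
Qed.

Section ACIFold.
Variables (T : eqType) (op : T -> T -> T).

Lemma foldr_closed (P : T -> Prop) x0 (l : seq T) :
  P x0 -> {in l, forall x, P x} ->
  (forall x y, P x -> P y -> P (op x y)) -> P (foldr op x0 l).
Proof.
move=> Px0 Pl Pop; elim: l Pl => [|y l IHl] Pl //=.
apply: Pop; first by apply: Pl; rewrite inE eqxx.
by apply: IHl => x lx; apply: Pl; rewrite inE lx orbT.
Qed.

Hypotheses (opA : associative op) (opC : commutative op) (opxx : idempotent_op op).

Lemma foldr_aci_absorb x0 (l : seq T) y :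
  y \in x0 :: l -> op y (foldr op x0 l) = foldr op x0 l.
Proof.
elim: l y => [|z l IHl] y /=; first by rewrite inE => /eqP->.
rewrite !inE => /or3P[/eqP->|/eqP->|ly]; rewrite opA ?opxx //.
  by rewrite (opC x0) -opA IHl // inE eqxx.
by rewrite (opC y) -opA IHl // inE ly orbT.
Qed.
End ACIFold.

Lemma join_closed_max d (L : finJoinSemilatticeType d) (V : {set L}) x0 :
  x0 \in V -> {in V &, forall x y, x `|` y \in V} ->
  exists2 a, a \in V & {in V, forall x, x <= a}.
Proof.
move=> Vx0 V_join; exists (foldr Order.join x0 (enum V)).
  by apply: (foldr_closed (P := fun x => x \in V)) => // x; rewrite mem_enum.
move=> x Vx; rewrite leEjoin (foldr_aci_absorb joinA joinC joinxx) //.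
by rewrite inE mem_enum Vx orbT.
Qed.

(* A record, so that HB can equip the semilattice of a semimodule with its
   order structures. *)
Record finSemilattice := FinSemilattice {
  fsl_car : finType;
  fsl_join : fsl_car -> fsl_car -> fsl_car;
  fsl_top : fsl_car;
  fsl_joinA : associative fsl_join;
  fsl_joinC : commutative fsl_join;
  fsl_joinxx : idempotent_op fsl_join;
  fsl_joinx1 : right_zero fsl_top fsl_join }.

Fact fsl_display : Order.disp_t. Proof. exact: Order.Disp tt tt. Qed.

Definition fsl_type (p : finSemilattice) : Type := fsl_car p.
HB.instance Definition _ (p : finSemilattice) := Finite.copy (fsl_type p) (fsl_car p).

Section FinSemilatticeOrder.
Variable p : finSemilattice.
Local Notation T := (fsl_type p).

Definition fsl_le (x y : T) : bool := fsl_join x y == y.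

Lemma fsl_le_refl : reflexive fsl_le.
Proof. by move=> x; rewrite /fsl_le fsl_joinxx. Qed.

Lemma fsl_le_anti : antisymmetric fsl_le.
Proof. by move=> x y /andP[/eqP xy /eqP yx]; rewrite -[x]yx fsl_joinC xy. Qed.

Lemma fsl_le_trans : transitive fsl_le.
Proof. by move=> y x z /eqP xy /eqP yz; apply/eqP; rewrite -yz fsl_joinA xy. Qed.

HB.instance Definition _ :=
  Order.Le_isPOrder.Build fsl_display T fsl_le_refl fsl_le_anti fsl_le_trans.

Lemma fsl_leEjoin (x y : T) : (y <= x) = (fsl_join x y == x).
Proof. by rewrite fsl_joinC. Qed.

HB.instance Definition _ := Order.POrder_Join_isSemilattice.Build fsl_display T
  (@fsl_joinC p) (@fsl_joinA p) fsl_leEjoin.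

Lemma fsl_lex1 (x : T) : x <= fsl_top p.
Proof. exact/eqP/fsl_joinx1. Qed.

HB.instance Definition _ := Order.hasTop.Build fsl_display T fsl_lex1.
End FinSemilatticeOrder.

Section JM1Subsemiring.
Context {d : Order.disp_t} {L : finTJoinSemilatticeType d}.
Variable R : {set {ffun L -> L}}.

Lemma Rt_ext (f g : Rt R) : val f =1 val g -> f = g.
Proof. by move=> fg; apply/val_inj/ffunP. Qed.

Hypothesis HR : subsemiring_JM1 R.

Lemma RaddE (f g : Rt R) : val (Radd f g) = fjoin (val f) (val g).
Proof. by rewrite /Radd insubdK //; case: HR => _ _ + _; apply; apply: valP. Qed.

Lemma RmulE (f g : Rt R) : val (Rmul f g) = fcomp (val f) (val g).
Proof. by rewrite /Rmul insubdK //; case: HR => _ _ _; apply; apply: valP. Qed.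

Lemma Rt_join (f : Rt R) x y : val f (x `|` y) = val f x `|` val f y.
Proof. by case: HR => + _ _ _ => /(_ _ (valP f))[]. Qed.

Lemma Rt_top (f : Rt R) : val f \top = \top.
Proof. by case: HR => + _ _ _ => /(_ _ (valP f))[]. Qed.

Lemma Rt_semiring : is_semiring (@Radd d L R) (@Rmul d L R).
Proof.
split=> [f g h|f g|f g h|f g h|f g h]; apply: Rt_ext => x;
  rewrite !(RaddE, RmulE, ffunE) ?Rt_join //.
- exact: joinA.
- exact: joinC.
Qed.

Lemma Radd_idem : add_idempotent (@Radd d L R).
Proof. by move=> f; apply: Rt_ext => x; rewrite RaddE ffunE joinxx. Qed.

Lemma Rt_semimodule :
  is_semimodule (@Radd d L R) (@Rmul d L R) Order.join (fun f x => val f x).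
Proof.
split=> [x y z|x y|f g x|f g x|f x y]; rewrite ?RmulE ?RaddE ?ffunE ?Rt_join //.
- exact: joinA.
- exact: joinC.
Qed.
End JM1Subsemiring.

Lemma nontrivial_nontop d (L : finTJoinSemilatticeType d) :
  nontrivial_L (L := L) -> exists a : L, a != \top.
Proof.
move=> [a [b ab]]; case: (eqVneq a \top) => [a_top|]; last by exists a.
by exists b; rewrite -a_top eq_sym.
Qed.

Section JM1Forward.
Context {d : Order.disp_t} {L : finTJoinSemilatticeType d}.
Variable R : {set {ffun L -> L}}.
Hypotheses (HR : subsemiring_JM1 R)
  (fab_in : forall a b : L, a != \top -> fab a b \in R)
  (fab_below : forall f, f \in R -> exists a b : L, a != \top /\ fle (fab a b) f).
Variable a0 : L.
Hypothesis a0_nontop : a0 != \top.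

Local Notation act := (fun (f : Rt R) (x : L) => val f x).

Definition fabR a b (a_nontop : a != \top) : Rt R := exist _ (fab a b) (fab_in b a_nontop).

Definition topR : Rt R := fabR \top a0_nontop.

Lemma fabRE a b (a_nontop : a != \top) x :
  val (fabR b a_nontop) x = if x <= a then b else \top.
Proof. by rewrite ffunE. Qed.

Lemma topRE x : val topR x = \top.
Proof. by rewrite fabRE; case: ifP. Qed.

Lemma Rt_absorbing_greatest : has_absorbing_greatest (@Radd d L R) (@Rmul d L R).
Proof.
exists topR; split=> [f|f]; first by apply: Rt_ext => x; rewrite RaddE // ffunE topRE joinx1.
by split; apply: Rt_ext => x; rewrite RmulE // ffunE !topRE ?Rt_top.
Qed.

Lemma fabR_sandwich (k : Rt R) p q c a (q_nontop : q != \top) (a_nontop : a != \top) :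
  Rmul (Rmul (fabR c q_nontop) k) (fabR p a_nontop) =
  if val k p <= q then fabR c a_nontop else topR.
Proof.
apply: Rt_ext => x; rewrite !RmulE // !ffunE.
case xa: (x <= a); case kpq: (val k p <= q);
  by rewrite ?topRE ?fabRE ?xa ?kpq ?Rt_top // le1x (negbTE q_nontop).
Qed.

Lemma congr_fabR_top rel (h k : Rt R) p :
  sr_congruence (@Radd d L R) (@Rmul d L R) rel -> rel h k -> val h p < val k p ->
  forall a b (a_nontop : a != \top), rel (fabR b a_nontop) topR.
Proof.
move=> [refl _ _ _ rel_mul] hk hkp a b a_nontop.
have hp_nontop : val h p != \top by rewrite lt_eqF // (lt_le_trans hkp) ?lex1.
have := rel_mul _ _ _ _ (rel_mul _ _ _ _ (refl (fabR b hp_nontop)) hk) (refl (fabR p a_nontop)).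
by rewrite !fabR_sandwich lexx lt_geF.
Qed.

Lemma Rt_simple : sr_simple (@Radd d L R) (@Rmul d L R).
Proof.
move=> rel C; have [refl sym trans rel_add _] := C.
case: (identity_or_nontrivial refl) => [|[f [g [fg f_neq_g]]]]; [by left | right].
have [p fgp] : exists p, val f p != val g p.
  case: (pickP (fun p => val f p != val g p)) => [p fgp|fg_eq]; first by exists p.
  by case: f_neq_g; apply: Rt_ext => p; apply/eqP; rewrite -[_ == _]negbK fg_eq.
have fab_top : forall a b (a_nontop : a != \top), rel (fabR b a_nontop) topR.
  have f_fg : rel f (Radd f g) by rewrite -{1}(Radd_idem HR f); apply: rel_add.
  have g_fg : rel g (Radd f g).
    by rewrite -{1}(Radd_idem HR g); apply: rel_add; [apply: sym|].
  have fgpE : val (Radd f g) p = val f p `|` val g p by rewrite RaddE // ffunE.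
  case: (eqVneq (val f p) (val (Radd f g) p)) => [fp_eq|fp_neq].
    apply: (congr_fabR_top C g_fg (p := p)).
    by rewrite lt_neqAle {2}fgpE leUr andbT -fp_eq eq_sym.
  by apply: (congr_fabR_top C f_fg (p := p)); rewrite lt_neqAle fp_neq fgpE leUl.
have all_top f' : rel f' topR.
  have [a [b [a_nontop fab_le]]] := fab_below (valP f').
  have := rel_add _ _ _ _ (refl f') (fab_top a b a_nontop).
  have -> : Radd f' (fabR b a_nontop) = f'.
    by apply: Rt_ext => x; rewrite RaddE // ffunE join_l // fab_le.
  suff -> : Radd f' topR = topR by [].
  by apply: Rt_ext => x; rewrite RaddE // ffunE topRE joinx1.
by move=> f' g'; apply: trans (all_top f') (sym _ _ (all_top g')).
Qed.

Lemma Rt_not_quasitrivial : ~ quasitrivial act.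
Proof.
move/(_ (fabR a0 a0_nontop) topR a0); rewrite fabRE topRE lexx => /eqP.
by rewrite (negbTE a0_nontop).
Qed.

Lemma Rt_sub_irreducible : sub_irreducible Order.join act.
Proof.
split; first exact: Rt_not_quasitrivial.
move=> N [_ _ N_act] [z Nz] f x Nx.
case: (eqVneq x \top) => [->|x_nontop]; first exact: Rt_top.
by case: Nz; have := N_act (fabR z x_nontop) x Nx; rewrite /= ffunE lexx.
Qed.

Lemma Rt_quotient_irreducible : quotient_irreducible Order.join act.
Proof.
split; first exact: Rt_not_quasitrivial.
move=> rel [refl sym trans _ rel_act].
case: (identity_or_nontrivial refl) => [|[x [y [xy x_neq_y]]]]; [by left | right].
have top_rel x' y' : rel x' y' -> ~~ (x' <= y') -> forall b, rel \top b.
  move=> x'y' x'y'_le b.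
  have y'_nontop : y' != \top by apply: contraNneq x'y'_le => ->; rewrite lex1.
  by have := rel_act (fabR b y'_nontop) _ _ x'y'; rewrite /= !ffunE lexx (negbTE x'y'_le).
have top_all : forall b, rel \top b.
  case: (boolP (x <= y)) => [xy_le|]; last exact: top_rel xy.
  apply: (top_rel y x (sym _ _ xy)); apply/negP => yx_le.
  by apply: x_neq_y; apply/le_anti; rewrite xy_le yx_le.
by move=> x' y'; apply: trans (sym _ _ (top_all x')) (top_all y').
Qed.

Lemma JM1_subsemiring_simple (L_star : star (@Order.join d L)) :
  [/\ is_semiring (@Radd d L R) (@Rmul d L R),
      sr_simple (@Radd d L R) (@Rmul d L R),
      add_idempotent (@Radd d L R),
      has_absorbing_greatest (@Radd d L R) (@Rmul d L R) &
      has_idem_irred_star_module (@Radd d L R) (@Rmul d L R)].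
Proof.
split; [exact: Rt_semiring | exact: Rt_simple | exact: Radd_idem |
        exact: Rt_absorbing_greatest |].
exists L, Order.join, act; split=> //; first exact: Rt_semimodule.
- exact: joinxx.
- by split; [exact: Rt_sub_irreducible | exact: Rt_quotient_irreducible].
Qed.
End JM1Forward.

Section Converse.
Variables (S : finType) (add mul : S -> S -> S).
Variables (d : Order.disp_t) (L : finTJoinSemilatticeType d) (act : S -> L -> L).
Hypotheses (HS : is_semiring add mul) (S_simple : sr_simple add mul)
  (add_idem : add_idempotent add).
Variable t : S.
Hypotheses (addt : forall s, add s t = t) (mul_t : forall s, mul s t = t /\ mul t s = t).
Hypotheses (HM : is_semimodule add mul (@Order.join d L) act)
  (M_irr : irreducible (@Order.join d L) act).
Variable u : L.
Hypothesis join_u : forall x, x <> \top -> u `|` x <> \top.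
Hypothesis S_nontrivial : (1 < #|S|)%N.

Let addA : associative add. Proof. by case: HS. Qed.
Let addC : commutative add. Proof. by case: HS. Qed.
Let actM r s x : act r (act s x) = act (mul r s) x. Proof. by case: HM. Qed.
Let actD r s x : act (add r s) x = act r x `|` act s x. Proof. by case: HM. Qed.
Let actU r x y : act r (x `|` y) = act r x `|` act r y. Proof. by case: HM. Qed.

Let not_quasitrivial : ~ quasitrivial act. Proof. by case: M_irr => -[]. Qed.

Let sub_irr N : subsemimodule (@Order.join d L) act N -> proper_subset N ->
  id_quasitrivial_on act N.
Proof. by case: M_irr => -[_ sub] _; apply: sub. Qed.

Let quo_irr rel : sm_congruence (@Order.join d L) act rel ->
  (forall x y, rel x y <-> x = y) \/ (forall x y, rel x y).
Proof. by case: M_irr => _ [_ quo]; apply: quo. Qed.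

Lemma act_le s : {homo act s : x y / x <= y}.
Proof. by move=> x y xy; rewrite -(join_r xy) actU leUl. Qed.

Lemma act_t_const x y : act t x = act t y.
Proof.
have C : sm_congruence (@Order.join d L) act (fun x y => act t x = act t y).
  split=> [?|? ?|? ? ?|? ? ? ?|r ? ?] //=.
  - by move=> -> ->.
  - by move=> xy x'y'; rewrite !actU xy x'y'.
  - by move=> xy; rewrite !actM (proj2 (mul_t r)) xy.
case: (quo_irr C) => [id_rel|]; last exact.
case: not_quasitrivial => r s z.
have act_id r' z' : act r' z' = z' by apply/id_rel; rewrite actM (proj2 (mul_t r')).
by rewrite !act_id.
Qed.

(* [c = t \top] is fixed by the action, and the congruence "equal modulo
   joining [c]" cannot be the identity. *)
Lemma act_t x : act t x = \top.
Proof.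
pose c := act t \top.
have act_c r : act r c = c by rewrite /c actM (proj1 (mul_t r)).
have C : sm_congruence (@Order.join d L) act (fun x y => x `|` c = y `|` c).
  split=> [?|? ?|? ? ?|z1 z2 z1' z2'|r ? ?] //=.
  - by move=> -> ->.
  - by move=> z12 z12'; rewrite -(joinxx c) joinACA [RHS]joinACA z12 z12'.
  - by move=> xy; rewrite -(act_c r) -!actU xy.
case: (quo_irr C) => [id_rel|full].
  case: not_quasitrivial => r s z.
  have join_c y : y `|` c = y by apply/id_rel; rewrite -joinA joinxx.
  have act_c' r' : act r' z = c.
    by rewrite -(join_c (act r' z)) /c (act_t_const \top z) -actD addt.
  by rewrite !act_c'.
by rewrite (act_t_const x \top) -/c -(joinxx c) (full c \top) join1x.
Qed.

Lemma act_top s : act s \top = \top.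
Proof. by rewrite -(act_t \top) actM (proj1 (mul_t s)). Qed.

Lemma exists_nontop : exists x : L, x != \top.
Proof.
case: (pickP (fun x : L => x != \top)) => [x x_nontop|all_top]; first by exists x.
case: not_quasitrivial => r s x.
have top_all (y : L) : y = \top by apply/eqP; move/negbFE: (all_top y).
by rewrite (top_all (act r x)) (top_all (act s x)).
Qed.

Lemma u_nontop : u != \top.
Proof.
have [x x_nontop] := exists_nontop.
by apply/eqP => u_top; apply: (join_u (x := x)); [exact/eqP | rewrite u_top join1x].
Qed.

Lemma exists_act_nontop x : x != \top -> exists s, act s x != \top.
Proof.
move=> x_nontop; apply: NNPP => none.
have ann s : act s x = \top by apply/eqP; apply: NNPP => sx; apply: none; exists s; exact/negP.
pose N y := forall s, act s y = \top.
have N_sub : subsemimodule (@Order.join d L) act N.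
  split; first by exists \top; apply: act_top.
  - by move=> y z Ny Nz s; rewrite actU Ny Nz joinxx.
  - by move=> r y Ny s; rewrite actM Ny.
case: (classic (proper_subset N)) => [/(sub_irr N_sub) N_fix | N_full].
  by move: x_nontop; rewrite -(N_fix t x ann) act_t eqxx.
case: not_quasitrivial => r s y.
have Ny : N y by apply: NNPP => Ny; apply: N_full; exists y.
by rewrite !Ny.
Qed.

Lemma act_onto x b : x != \top -> exists s, act s x = b.
Proof.
move=> x_nontop; pose N y := exists s, act s x = y.
have N_sub : subsemimodule (@Order.join d L) act N.
  split; first by exists (act t x), t.
  - by move=> _ _ [r <-] [s <-]; exists (add r s); rewrite actD.
  - by move=> r _ [s <-]; exists (mul r s); rewrite actM.
case: (classic (proper_subset N)) => [/(sub_irr N_sub) N_fix | N_full].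
  have [s sx] := exists_act_nontop x_nontop.
  by move: sx; rewrite -(N_fix t _ (ex_intro _ s erefl)) act_t eqxx.
by apply: NNPP => no_b; apply: N_full; exists b.
Qed.

Lemma act_le_sep c x y : c != \top ->
  (forall s, (act s x <= c) = (act s y <= c)) -> x = y.
Proof.
move=> c_nontop; pose rel x y := forall s, (act s x <= c) = (act s y <= c).
have C : sm_congruence (@Order.join d L) act rel.
  split=> //.
  - by move=> ? ? xy s; rewrite xy.
  - by move=> ? ? ? xy yz s; rewrite xy yz.
  - by move=> ? ? ? ? xy x'y' s; rewrite !actU !leUx xy x'y'.
  - by move=> r ? ? xy s; rewrite !actM xy.
case: (quo_irr C) => [id_rel|full]; first by move/id_rel.
have [x1 x1_nontop] := exists_nontop; have [s sx1] := act_onto c x1_nontop.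
by move: (full x1 \top s); rewrite sx1 act_top lexx le1x (negbTE c_nontop).
Qed.

Lemma act_inj r s : act r =1 act s -> r = s.
Proof.
pose rel r s := act r =1 act s.
have C : sr_congruence add mul rel.
  split=> //.
  - by move=> ? ? rs x; rewrite rs.
  - by move=> ? ? ? rs st x; rewrite rs st.
  - by move=> ? ? ? ? rs r's' x; rewrite !actD rs r's'.
  - by move=> ? ? ? ? rs r's' x; rewrite -!actM r's' rs.
case: (S_simple C) => [id_rel|full]; first by move/id_rel.
by case: not_quasitrivial => r' s' x; apply: full.
Qed.

(* [g] is the sum of all [q] with [q a <= c]. *)
Lemma exists_residual a c : a != \top -> c != \top ->
  exists g, forall x, (act g x <= c) = (x <= a).
Proof.
move=> a_nontop c_nontop; have [q0 q0a] := act_onto c a_nontop.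
pose l := [seq q <- enum S | act q a <= c].
pose g := foldr add q0 l.
have ga : act g a <= c.
  apply: (foldr_closed (P := fun q => act q a <= c)); first by rewrite q0a.
  - by move=> q; rewrite mem_filter => /andP[].
  - by move=> q r qa ra; rewrite actD leUx qa ra.
have g_ub q y : act q a <= c -> act q y <= act g y.
  move=> qa; rewrite /g -(foldr_aci_absorb addA addC add_idem (y := q)) ?actD ?leUl //.
  by rewrite inE mem_filter mem_enum qa orbT.
exists g => x; apply/idP/idP => [gx|xa]; last exact: le_trans (act_le g xa) ga.
suff ax : a `|` x = a by rewrite -ax leUr.
apply: (act_le_sep c_nontop) => s; rewrite actU leUx.
by apply/idP/idP => [/andP[] //|sa]; rewrite sa (le_trans (g_ub _ _ sa) gx).
Qed.

(* Among the [r] with [r x != \top] for some [x], one with the fewest such [x]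
   has a join-closed, hence principal, support. *)
Lemma exists_principal_support :
  exists r a, a != \top /\ forall x, (act r x != \top) = (x <= a).
Proof.
pose V r := [set x | act r x != \top].
have ex_n : exists n, [exists r, (0 < #|V r|)%N && (#|V r| == n)].
  have [x1 x1_nontop] := exists_nontop; have [q qx1] := act_onto u x1_nontop.
  exists #|V q|; apply/existsP; exists q; rewrite eqxx andbT card_gt0.
  by apply/set0Pn; exists x1; rewrite inE qx1 u_nontop.
case: (ex_minnP ex_n) => m /existsP[r /andP[Vr_gt0 /eqP Vr_m]] min_m.
have V_mul q x : x \in V (mul q r) -> V (mul q r) = V r.
  move=> Vx; apply/eqP; rewrite eqEcard; apply/andP; split.
    by apply/subsetP => y; rewrite !inE -actM; apply: contra => /eqP->; rewrite act_top.
  rewrite Vr_m; apply: min_m; apply/existsP; exists (mul q r).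
  by rewrite eqxx andbT card_gt0; apply/set0Pn; exists x.
have V_join : {in V r &, forall x y, x `|` y \in V r}.
  move=> x y; rewrite !inE => rx ry; have [q qrx] := act_onto u rx.
  have : y \in V (mul q r) by rewrite (V_mul q x) ?inE // -actM qrx u_nontop.
  rewrite inE -actM => qry; apply/eqP => rxy.
  by apply: (join_u (x := act q (act r y))); [exact/eqP | rewrite -qrx -actU -actU rxy act_top].
have [x0 Vx0] : exists x0, x0 \in V r by apply/set0Pn; rewrite -card_gt0.
have [a Va a_max] := join_closed_max Vx0 V_join.
exists r, a; split; first by apply: contraTneq Va => ->; rewrite inE act_top eqxx.
move=> x; apply/idP/idP => [rx|xa]; first by apply: a_max; rewrite inE.
by move: Va; rewrite inE; apply: contra => /eqP rx; rewrite -le1x -rx act_le.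
Qed.

Lemma principal_support c : c != \top ->
  exists p, forall x, (act p x != \top) = (x <= c).
Proof.
move=> c_nontop; have [r [a [a_nontop ra]]] := exists_principal_support.
have [g gx] := exists_residual c_nontop a_nontop.
by exists (mul r g) => x; rewrite -actM ra gx.
Qed.

Lemma annihilator_sep x y :
  (forall q, (act q x == \top) = (act q y == \top)) -> x = y.
Proof.
pose rel x y := forall q, (act q x == \top) = (act q y == \top).
have rel_join z1 z1' z2 z2' : rel z1 z1' -> rel z2 z2' ->
    forall q, act q (z1' `|` z2') = \top -> act q (z1 `|` z2) = \top.
  move=> z11' z22' q qz'; apply/eqP; apply: contraT; set c := act q (z1 `|` z2) => c_nontop.
  have [p pc] := principal_support c_nontop.
  have below z z' : rel z z' -> act q z <= c -> act q z' <= c.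
    by move=> zz' qz; rewrite -pc actM -zz' -actM pc.
  have le1 : act q z1' <= c by apply: (below z1) => //; apply: act_le; exact: leUl.
  have le2 : act q z2' <= c by apply: (below z2) => //; apply: act_le; exact: leUr.
  have : act q (z1' `|` z2') <= c by rewrite actU leUx le1 le2.
  by rewrite qz' le1x (negbTE c_nontop).
have C : sm_congruence (@Order.join d L) act rel.
  split=> [?|? ? zz' q|? ? ? z12 z23 q|z1 z2 z1' z2' z12 z12' q|r ? ? z12 q].
  - by [].
  - by rewrite zz'.
  - by rewrite z12 z23.
  - have sym z z' : rel z z' -> rel z' z by move=> zz' q'; rewrite zz'.
    by apply/eqP/eqP; [apply: rel_join; apply: sym | apply: rel_join].
  - by rewrite !actM z12.
case: (quo_irr C) => [id_rel|full]; first by move/id_rel.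
have [x1 x1_nontop] := exists_nontop; have [q qx1] := act_onto u x1_nontop.
by move: (full x1 \top q); rewrite qx1 act_top eqxx (negbTE u_nontop).
Qed.
(* For [s] with the smallest image of size > 1, each [q] either kills that
   image or is injective on it, so the non-[\top] values of [s] are annihilated
   by the same [q] and hence coincide. *)
Lemma exists_two_valued : exists s b,
  [/\ b != \top, exists x, act s x = b & forall x, act s x != \top -> act s x = b].
Proof.
pose Y s := [set act s x | x in L].
have Y_top s : \top \in Y s by rewrite -(act_top s) imset_f.
have ex_n : exists n, [exists s, (1 < #|Y s|)%N && (#|Y s| == n)].
  have [x1 x1_nontop] := exists_nontop; have [q qx1] := act_onto u x1_nontop.
  exists #|Y q|; apply/existsP; exists q; rewrite eqxx andbT.
  apply/card_gt1P; exists u, \top; split; rewrite ?Y_top ?u_nontop //.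
  by rewrite -qx1 imset_f.
case: (ex_minnP ex_n) => m /existsP[s /andP[Ys_gt1 /eqP Ys_m]] min_m.
have Y_ann q y y' : y \in Y s -> y' \in Y s -> y != \top ->
    act q y = \top -> act q y' = \top.
  move=> Yy Yy' y_nontop qy; apply/eqP; apply: contraT => qy'.
  have Y_mul : Y (mul q s) = [set act q z | z in Y s].
    by rewrite -imset_comp; apply: eq_imset => z; rewrite /= actM.
  have m_le : (m <= #|Y (mul q s)|)%N.
    apply: min_m; apply/existsP; exists (mul q s); rewrite eqxx andbT Y_mul.
    apply/card_gt1P; exists (act q y'), \top; split=> //; first exact: imset_f.
    by rewrite -(act_top q) imset_f.
  have /imset_injP q_inj : #|[set act q z | z in Y s]| == #|Y s|.
    by rewrite eqn_leq leq_imset_card Ys_m -Y_mul.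
  have y_top : y = \top by apply: q_inj; rewrite ?Y_top // qy act_top.
  by rewrite y_top eqxx in y_nontop.
have [b [Yb b_nontop]] : exists b, b \in Y s /\ b != \top.
  case/card_gt1P: Ys_gt1 => y1 [y2 [Yy1 Yy2 y12]].
  case: (eqVneq y1 \top) => [y1_top|]; last by exists y1.
  by exists y2; rewrite -y1_top eq_sym.
have [x0 _ x0b] := imsetP Yb.
exists s, b; split => //; first by exists x0.
move=> x sx; apply: annihilator_sep => q.
have Ysx : act s x \in Y s by apply: imset_f.
by apply/eqP/eqP; apply: Y_ann.
Qed.

Lemma two_valued_fab s b : b != \top -> (exists x, act s x = b) ->
  (forall x, act s x != \top -> act s x = b) ->
  exists2 a, a != \top & act s =1 fab a b.
Proof.
move=> b_nontop [x0 sx0] two_valued.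
pose V := [set x | act s x != \top].
have Vx0 : x0 \in V by rewrite inE sx0.
have V_join : {in V &, forall x y, x `|` y \in V}.
  by move=> x y; rewrite !inE => /two_valued sx /two_valued sy; rewrite actU sx sy joinxx.
have [a Va a_max] := join_closed_max Vx0 V_join.
move: Va; rewrite inE => sa.
exists a; first by apply: contraNneq sa => ->; rewrite act_top.
move=> x; rewrite ffunE; case: ifPn => [xa|xa].
  by apply: two_valued; apply: contraNneq sa => sx; rewrite -le1x -sx act_le.
by apply/eqP; apply: contraNT xa => sx; apply: a_max; rewrite inE.
Qed.

Lemma act_fab a b : a != \top -> exists s, act s =1 fab a b.
Proof.
move=> a_nontop; have [s0 [b0 [b0_nontop s0b0 two_valued]]] := exists_two_valued.
have [a0 a0_nontop s0E] := two_valued_fab b0_nontop s0b0 two_valued.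
have [g gx] := exists_residual a_nontop a0_nontop.
have [q qb0] := act_onto b b0_nontop.
exists (mul q (mul s0 g)) => x; rewrite -!actM s0E !ffunE gx.
by case: ifP => _; rewrite ?qb0 ?act_top.
Qed.

Definition dominates_fab (s : S) : Prop :=
  exists a b, a != \top /\ forall x, fab a b x <= act s x.

Lemma dominates_fab_addl p q : dominates_fab q -> dominates_fab (add p q).
Proof.
move=> [a [b [a_nontop qab]]]; exists a, b; split=> // x.
by rewrite actD (le_trans (qab x)) ?leUr.
Qed.

Lemma dominates_fab_mull p q : dominates_fab q -> dominates_fab (mul p q).
Proof.
move=> [a [b [a_nontop qab]]]; exists a, (act p b); split=> // x.
rewrite -actM (le_trans _ (act_le p (qab x))) // !ffunE.
by case: ifP; rewrite ?act_top.
Qed.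

Lemma dominates_fab_mulr p q : dominates_fab q -> dominates_fab (mul q p).
Proof.
move=> [a [b [a_nontop qab]]].
case: (pickP (fun x => act p x <= a)) => [x0 px0|none]; last first.
  exists a, b; split=> // x; rewrite -actM.
  by have := qab (act p x); rewrite ffunE none le1x => /eqP->; apply: lex1.
pose V := [set x | act p x <= a].
have V_join : {in V &, forall x y, x `|` y \in V}.
  by move=> x y; rewrite !inE => px py; rewrite actU leUx px py.
have Vx0 : x0 \in V by rewrite inE.
have [a' Va' a'_max] := join_closed_max Vx0 V_join.
move: Va'; rewrite inE => pa'.
exists a', b; split.
  by apply: contraNneq a_nontop => a'_top; rewrite -le1x -(act_top p) -a'_top.
move=> x; rewrite -actM; have := qab (act p x); rewrite !ffunE.
case xa': (x <= a'); first by rewrite (le_trans (act_le p xa') pa').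
by case: ifPn => // pxa; rewrite a'_max ?inE in xa'.
Qed.

(* The congruence "equal, or both dominating some [f_{a,b}]" is not the
   identity, hence full. *)
Lemma dominates_fab_all s : dominates_fab s.
Proof.
have C : sr_congruence add mul
    (fun r r' => r = r' \/ dominates_fab r /\ dominates_fab r').
  split=> [r|r r'|r r' r''|r1 r2 r1' r2'|r1 r2 r1' r2'] /=.
  - by left.
  - by case=> [->|[]]; [left | right].
  - by case=> [->|[Dr Dr']] [<-|[? ?]]; [left | right..].
  - case=> [<-|[D1 D2]] [<-|[D1' D2']]; [by left | right..]; split;
      first [exact: dominates_fab_addl | rewrite addC; exact: dominates_fab_addl].
  - case=> [<-|[D1 D2]] [<-|[D1' D2']]; [by left | right..]; split;
      first [exact: dominates_fab_mull | exact: dominates_fab_mulr].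
have [x1 x1_nontop] := exists_nontop.
have [s1 s1E] := act_fab x1 x1_nontop.
have D1 : dominates_fab s1 by exists x1, x1; split=> // x; rewrite s1E.
have Dt : dominates_fab t by exists x1, \top; split=> // x; rewrite act_t lex1.
case: (S_simple C) => [id_rel|full].
  have /id_rel s1t : s1 = t \/ dominates_fab s1 /\ dominates_fab t by right.
  move: (s1E x1); rewrite s1t act_t ffunE lexx => top_x1.
  by rewrite -top_x1 eqxx in x1_nontop.
have [r' r's] : exists r', r' != s.
  case/card_gt1P: S_nontrivial => y1 [y2 [_ _ y12]].
  case: (eqVneq y1 s) => [y1s|]; last by exists y1.
  by exists y2; rewrite -y1s eq_sym.
by case: (full s r') => [sr'|[]//]; rewrite sr' eqxx in r's.
Qed.

Lemma act_image_representation : exists R : {set {ffun L -> L}},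
  [/\ nontrivial_L (L := L) /\ star (@Order.join d L),
      subsemiring_JM1 R,
      (forall a b : L, a != \top -> fab a b \in R),
      (forall f, f \in R -> exists a b : L, a != \top /\ fle (fab a b) f) &
      exists phi : S -> Rt R,
        [/\ bijective phi,
            (forall x y, phi (add x y) = Radd (phi x) (phi y)) &
            (forall x y, phi (mul x y) = Rmul (phi x) (phi y))]].
Proof.
pose phi s : {ffun L -> L} := [ffun x => act s x].
have phiE s x : phi s x = act s x by rewrite ffunE.
pose R := [set phi s | s : S].
have R_phi s : phi s \in R by apply: imset_f.
have phiD r s : fjoin (phi r) (phi s) = phi (add r s).
  by apply/ffunP => x; rewrite !ffunE actD.
have phiM r s : fcomp (phi r) (phi s) = phi (mul r s).
  by apply/ffunP => x; rewrite !ffunE actM.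
have HR : subsemiring_JM1 R.
  split; [|by exists (phi t)|..].
  - by move=> _ /imsetP[s _ ->]; split=> [x y|]; rewrite !ffunE ?actU ?act_top.
  - by move=> _ _ /imsetP[r _ ->] /imsetP[s _ ->]; rewrite phiD.
  - by move=> _ _ /imsetP[r _ ->] /imsetP[s _ ->]; rewrite phiM.
have [x1 x1_nontop] := exists_nontop.
exists R; split => //.
- split; first by exists x1, \top.
  by exists \top; split=> [x|]; [exact: joinx1 | exists u].
- move=> a b a_nontop; have [s sE] := act_fab b a_nontop.
  suff -> : fab a b = phi s by [].
  by apply/ffunP => x; rewrite phiE sE.
- move=> _ /imsetP[s _ ->]; have [a [b [a_nontop sab]]] := dominates_fab_all s.
  by exists a, b; split=> // x; rewrite phiE.
pose phiR s : Rt R := exist _ (phi s) (R_phi s).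
have phiR_inj : injective phiR.
  move=> r s /(congr1 val) /= /ffunP rs; apply: act_inj => x.
  by have := rs x; rewrite !phiE.
exists phiR; split.
- apply: inj_card_bij phiR_inj _.
  by rewrite card_sig; apply: leq_imset_card.
- by move=> r s; apply: val_inj; rewrite RaddE //= phiD.
- by move=> r s; apply: val_inj; rewrite RmulE //= phiM.
Qed.
End Converse.

Theorem theorem5p4 :
  (forall (d : Order.disp_t) (L : finTJoinSemilatticeType d)
          (R : {set {ffun L -> L}}),
     @nontrivial_L d L ->
     star (@Order.join d L) ->
     subsemiring_JM1 R ->
     (forall a b : L, a != \top -> fab a b \in R) ->
     (forall f, f \in R -> exists a b : L, a != \top /\ fle (fab a b) f) ->
     [/\ is_semiring (@Radd d L R) (@Rmul d L R),
         sr_simple (@Radd d L R) (@Rmul d L R),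
         add_idempotent (@Radd d L R),
         has_absorbing_greatest (@Radd d L R) (@Rmul d L R) &
         has_idem_irred_star_module (@Radd d L R) (@Rmul d L R)])
  /\
  (forall (S : finType) (add mul : S -> S -> S),
     is_semiring add mul -> (2 < #|S|)%N ->
     sr_simple add mul -> add_idempotent add ->
     has_absorbing_greatest add mul ->
     has_idem_irred_star_module add mul ->
     exists (d : Order.disp_t) (L : finTJoinSemilatticeType d)
            (R : {set {ffun L -> L}}),
       [/\ @nontrivial_L d L /\ star (@Order.join d L),
           subsemiring_JM1 R,
           (forall a b : L, a != \top -> fab a b \in R),
           (forall f, f \in R -> exists a b : L, a != \top /\ fle (fab a b) f) &
           exists phi : S -> Rt R,
             [/\ bijective phi,
                 (forall x y, phi (add x y) = Radd (phi x) (phi y)) &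
                 (forall x y, phi (mul x y) = Rmul (phi x) (phi y))]]).
Proof.
split.
  move=> d L R /nontrivial_nontop[a0 a0_nontop] L_star HR fab_in fab_below.
  exact: (JM1_subsemiring_simple HR fab_in fab_below a0_nontop L_star).
move=> S add mul HS S_gt2 S_simple add_idem [t [addt mul_t]].
move=> [M [addM [act [HM addMxx M_irr [top [addM_top [u join_u]]]]]]].
have [addMA addMC _ _ _] := HM.
pose L := fsl_type (FinSemilattice addMA addMC addMxx addM_top).
exists fsl_display, L.
exact: (act_image_representation (L := L) (act := act) HS S_simple add_idem
          addt mul_t HM M_irr join_u (ltnW S_gt2)).
Qed.
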